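(* Let $a,b\in\mathbb{Q}_3$ with $\gamma(a)=3$, $\gamma(b)=0$ and $(b_0,b_1)=(1,0)$ or $(2,2)$. Then $x=\sum_{k\ge0}x_k3^k\in\mathbb{Z}_3^*$ is a solution of $x^3+ax=b$ if and only if the congruences $$x_0^3\equiv b_0\pmod3,\qquad x_0^3\equiv b_0+3b_1\pmod9,$$ $$x_0^2x_1+M_1(x_0)\equiv b_2\pmod3,$$ $$x_0^2x_2+P_3^2(x_0,x_1)+x_0a_0+x_0x_1^2+M_2(x_0,x_1)\equiv b_3\pmod3,$$ $$x_0^2x_{k-1}+P_k^{k-1}(x_0,\dots,x_{k-2})+2x_0x_1x_{k-2}+x_{k-3}a_0+x_{k-4}a_1+\dots+x_0a_{k-3}+M_{k-1}(x_0,\dots,x_{k-2})\equiv b_k\pmod3,\quad k\ge4,$$ are fulfilled, where the integers $M_k(x_0,\dots,x_{k-1})$ are defined by $$x_0^3=b_0+3b_1+9M_1(x_0),$$ $$x_0^2x_1=b_2-M_1(x_0)+3M_2(x_0,x_1),$$ $$x_0^2x_2+P_3^2(x_0,x_1)+x_0a_0+x_0x_1^2=b_3-M_2(x_0,x_1)+3M_3(x_0,x_1,x_2),$$ $$x_0^2x_{k-1}+P_k^{k-1}(x_0,\dots,x_{k-2})+2x_0x_1x_{k-2}+x_{k-3}a_0+\dots+x_0a_{k-3}=b_k-M_{k-1}(x_0,\dots,x_{k-2})+3M_k(x_0,\dots,x_{k-1}),\quad k\ge4.$$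
   Context: Write $a=3^{\gamma(a)}(a_0+a_13+a_23^2+\dots)$, $b=3^{\gamma(b)}(b_0+b_13+b_23^2+\dots)$ in canonical form, with digits $a_j,b_j\in\{0,1,2\}$, $a_0,b_0\ne0$, $\gamma(a),\gamma(b)\in\mathbb{Z}$. $\mathbb{Z}_3^*$ is the set of $3$-adic units; $x\in\mathbb{Z}_3^*$ is written $x=x_0+x_13+x_23^2+\dots$ with $x_j\in\{0,1,2\}$, $x_0\ne0$. For $j\le k$, $P_k^j(x_0,\dots,x_{j-1})=\sum\frac{6}{m_0!\cdots m_{j-1}!}x_0^{m_0}\cdots x_{j-1}^{m_{j-1}}$, the sum over nonnegative integers $m_0,\dots,m_{j-1}$ with $\sum_{i=0}^{j-1}m_i=3$ and $\sum_{i=1}^{j-1}im_i=k$. *)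

From mathcomp Require Import all_boot all_order all_algebra.
Set Implicit Arguments. Unset Strict Implicit. Unset Printing Implicit Defensive.
Import Order.TTheory GRing.Theory Num.Theory.
Local Open Scope ring_scope.

Definition digits3 (d : nat -> nat) : Prop := forall k, (d k < 3)%N.

(* Truncation sum_{k<n} d_k 3^k, an integer congruent mod 3^n to the 3-adic
   integer with digits d. *)
Definition trunc3 (d : nat -> nat) (n : nat) : int :=
  \sum_(k < n) (d k)%:Z * 3 ^+ k.

(* With a = 3^3 (a_0 + a_1 3 + ...) (gamma(a) = 3), b = b_0 + b_1 3 + ...
   (gamma(b) = 0) and x = x_0 + x_1 3 + ..., the equation x^3 + a x = b holds
   in Q_3 (all three numbers lie in Z_3 = lim Z/3^n) iff it holds modulo 3^n
   for every n, computed on truncations. *)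
Definition cubic_solution (a b x : nat -> nat) : Prop :=
  forall n : nat,
    ((trunc3 x n) ^+ 3 + 3 ^+ 3 * trunc3 a n * trunc3 x n
       == trunc3 b n %[mod (3 ^+ n)%R])%Z.

(* P_k^j(x_0,...,x_{j-1}) = sum 6/(m_0!...m_{j-1}!) x_0^{m_0}...x_{j-1}^{m_{j-1}}
   over m_i >= 0 with sum m_i = 3 and sum i m_i = k (each m_i <= 3, so
   m ranges over functions 'I_j -> 'I_4). *)
Definition Pkj (k j : nat) (x : nat -> int) : int :=
  \sum_(m : {ffun 'I_j -> 'I_4} |
          ((\sum_(i < j) (m i : nat) == 3)%N &&
           (\sum_(i < j) (i : nat) * (m i : nat) == k)%N))
     ((6 %/ \prod_(i < j) (m i : nat)`!)%N)%:Z
       * \prod_(i < j) x i ^+ (m i : nat).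

Definition zd (d : nat -> nat) : nat -> int := fun k => (d k)%:Z.

Definition Eterm (a x : nat -> nat) (k : nat) : int :=
  let X := zd x in let A := zd a in
  if k == 2%N then X 0%N ^+ 2 * X 1%N
  else if k == 3%N then
    X 0%N ^+ 2 * X 2%N + Pkj 3 2 X + X 0%N * A 0%N + X 0%N * X 1%N ^+ 2
  else
    X 0%N ^+ 2 * X k.-1 + Pkj k k.-1 X + 2 * X 0%N * X 1%N * X k.-2
    + \sum_(i < k.-2) X (k - 3 - i)%N * A i.

(* M_1 = (x_0^3 - b_0 - 3 b_1)/9, M_k = (E_k + M_{k-1} - b_k)/3 for k >= 2
   (integer division; the congruences below say these divisions are exact).
   M_0 is unused. *)
Fixpoint Mseq (a b x : nat -> nat) (k : nat) : int :=
  match k with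
  | O => 0
  | S O => (((zd x 0%N) ^+ 3 - zd b 0%N - 3 * zd b 1%N) %/ 9)%Z
  | S ((S _) as k1) => ((Eterm a x k + Mseq a b x k1 - zd b k) %/ 3)%Z
  end.

Definition congruences (a b x : nat -> nat) : Prop :=
  [/\ ((zd x 0%N) ^+ 3 == zd b 0%N %[mod 3])%Z,
      ((zd x 0%N) ^+ 3 == zd b 0%N + 3 * zd b 1%N %[mod 9])%Z &
      forall k : nat, (2 <= k)%N ->
        (Eterm a x k + Mseq a b x k.-1 == zd b k %[mod 3])%Z].

From mathcomp Require Import all_boot all_order all_algebra.
From mathcomp Require Import zify ring.
Set Implicit Arguments. Unset Strict Implicit. Unset Printing Implicit Defensive.
Import Order.TTheory GRing.Theory Num.Theory.
Local Open Scope ring_scope.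

(* Read the digit sequences as polynomials X, A, B evaluated at t = 3.  Modulo
   3^n, x^3 + a x only sees the coefficients c_s, s < n, of
   X(t)^3 + t^3 A(t) X(t), and by the multinomial theorem the coefficient of
   t^k in X(t)^3 is P_k^{k-1} + 3 x_0^2 x_k + 6 x_0 x_1 x_{k-1} for k >= 3.
   Moving the two multiples of 3 into the equation of the next digit turns
   sum_{s <= N} c_s 3^s into x_0^3 + sum_{2 <= k <= N} E_k 3^k up to a
   multiple of 3^(N+1).  Comparing this sum with the digits of b from the
   bottom up, the congruences say exactly that each carry M_k is an integer. *)

Section FfunRcons.
Variables (T : Type) (j : nat).

Definition ffun_rcons (m : {ffun 'I_j -> T}) (r : T) : {ffun 'I_j.+1 -> T} :=
  [ffun i => if unlift ord_max i is Some i' then m i' else r].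

Lemma ffun_rcons_widen m r i : ffun_rcons m r (widen_ord (leqnSn j) i) = m i.
Proof.
have -> : widen_ord (leqnSn j) i = lift ord_max i by exact/val_inj/esym/lift_max.
by rewrite ffunE liftK.
Qed.

Lemma ffun_rcons_max m r : ffun_rcons m r ord_max = r.
Proof. by rewrite ffunE unlift_none. Qed.

Lemma big_ffun_rcons (V : Type) (idx : V) (op : Monoid.law idx)
    (F : nat -> T -> V) m r :
  \big[op/idx]_(i < j.+1) F i (ffun_rcons m r i) =
  op (\big[op/idx]_(i < j) F i (m i)) (F j r).
Proof.
rewrite big_ord_recr ffun_rcons_max; congr (op _ _).
by apply: eq_bigr => i _; rewrite ffun_rcons_widen.
Qed.

End FfunRcons.

Lemma sum_ffunS (V : nmodType) (T : finType) j (F : {ffun 'I_j.+1 -> T} -> V) :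
  \sum_m F m = \sum_(r : T) \sum_(m : {ffun 'I_j -> T}) F (ffun_rcons m r).
Proof.
rewrite pair_big /= (reindex (fun p : T * {ffun 'I_j -> T} => ffun_rcons p.2 p.1)) //=.
exists (fun m => (m ord_max, [ffun i => m (widen_ord (leqnSn j) i)])).
  move=> [r m] _ /=; rewrite ffun_rcons_max; congr pair.
  by apply/ffunP => i; rewrite ffunE ffun_rcons_widen.
move=> m _; apply/ffunP => i; rewrite ffunE.
case: unliftP => [i' ->|->]; last by [].
rewrite ffunE; congr (m _); apply: val_inj; exact: esym (lift_max i').
Qed.

Lemma dvdn_prod_fact_sum j (m : 'I_j -> nat) :
  (\prod_(i < j) (m i)`! %| (\sum_(i < j) m i)`!)%N.
Proof.
elim: j m => [|j IH] m; first by rewrite !big_ord0.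
rewrite !big_ord_recr /=; set S := (\sum_(i < j) _)%N.
rewrite -(bin_fact (leq_addl S (m ord_max))) addnK mulnCA.
by rewrite mulnC dvdn_pmul2l ?fact_gt0 // dvdn_mull // IH.
Qed.

Lemma divn_fact_addn S r P : (P %| S`!)%N ->
  ((S + r)`! %/ (P * r`!) = 'C(S + r, r) * (S`! %/ P))%N.
Proof.
move=> dvdP; have P_gt0 : (0 < P)%N := dvdn_gt0 (fact_gt0 S) dvdP.
rewrite -(bin_fact (leq_addl S r)) addnK -{1}(divnK dvdP).
rewrite [X in (X %/ _)%N](_ : _ = 'C(S + r, r) * (S`! %/ P) * (P * r`!))%N; last by ring.
by rewrite mulnK // muln_gt0 P_gt0 fact_gt0.
Qed.

Section PowerCoefficients.
Variable R : comNzRingType.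

Lemma coef_exprD_scaleXn (p : {poly R}) c j s k :
  ((p + c *: 'X^j) ^+ s)`_k =
  \sum_(r < s.+1 | (j * r <= k)%N) (p ^+ (s - r))`_(k - j * r) * c ^+ r *+ 'C(s, r).
Proof.
rewrite exprDn coef_sum [RHS]big_mkcond /=; apply: eq_bigr => r _.
rewrite exprZn -exprM -scalerAr coefMn coefZ coefMXn.
by case: leqP; rewrite ?mulr0 ?mul0rn // mulrC.
Qed.

Variable X : nat -> R.

Lemma poly_ord0 : \poly_(i < 0) X i = 0.
Proof. by rewrite poly_def big_ord0. Qed.

Lemma poly_ord_recr n : \poly_(i < n.+1) X i = \poly_(i < n) X i + X n *: 'X^n.
Proof. by rewrite !poly_def big_ord_recr. Qed.

Lemma coef_poly_expS e j k : ((\poly_(i < j.+1) X i) ^+ e)`_k =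
  \sum_(r < e.+1 | (j * r <= k)%N)
     ((\poly_(i < j) X i) ^+ (e - r))`_(k - j * r) * X j ^+ r *+ 'C(e, r).
Proof. by rewrite poly_ord_recr coef_exprD_scaleXn. Qed.

Lemma coef_poly_exp_multinomial d j s k : (s <= d)%N ->
  ((\poly_(i < j) X i) ^+ s)`_k =
  \sum_(m : {ffun 'I_j -> 'I_d.+1} | (\sum_(i < j) (m i : nat) == s)%N &&
                                       (\sum_(i < j) i * (m i : nat) == k)%N)
    ((s`! %/ \prod_(i < j) (m i : nat)`!)%N)%:R * \prod_(i < j) X i ^+ (m i : nat).
Proof.
elim: j s k => [|j IH] s k le_sd.
  rewrite poly_ord0 expr0n coefMn coef1.
  under eq_bigl do rewrite !big_ord0.
  under eq_bigr do rewrite !big_ord0 divn1 mulr1.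
  case: s le_sd => [|s] _; case: k => [|k] /=; last 3 first.
  - by rewrite big_pred0 ?mulr0n.
  - by rewrite big_pred0 ?mulr0n ?mul0rn.
  - by rewrite big_pred0 ?mulr0n ?mul0rn.
  - by rewrite (eq_bigl xpredT) // sumr_const card_ffun !card_ord.
rewrite coef_poly_expS (big_ord_widen_cond d.+1 (fun r => j * r <= k)%N
  (fun r => ((\poly_(i < j) X i) ^+ (s - r))`_(k - j * r) * X j ^+ r *+ 'C(s, r)))
  ?ltnS //.
rewrite [LHS]big_mkcond [RHS]big_mkcond sum_ffunS /=; apply: eq_bigr => r _.
under eq_bigr => m _ do
  rewrite (big_ffun_rcons _ (fun _ x => nat_of_ord x))
          (big_ffun_rcons _ (fun i x => i * nat_of_ord x)%N)
          (big_ffun_rcons _ (fun _ x => (nat_of_ord x)`!))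
          (big_ffun_rcons _ (fun i x => X i ^+ nat_of_ord x)) /=.
case: ifP => [/andP[le_jr_k lt_r_s] | /negbT cond_r]; last first.
  rewrite big1 // => m _; case: ifP => // /andP[/eqP sum_m /eqP wsum_m].
  by move: cond_r; rewrite -sum_m -wsum_m; lia.
rewrite IH; last by lia.
rewrite big_mkcond mulr_suml -sumrMnl; apply: eq_bigr => m _ /=.
set S := (\sum_(i < j) m i)%N.
have -> : (S + r == s)%N = (S == s - r)%N by apply/eqP/eqP; lia.
have -> : (\sum_(i < j) i * m i + j * r == k)%N = (\sum_(i < j) i * m i == k - j * r)%N.
  by apply/eqP/eqP; lia.
have [sum_m|_] := eqVneq S (s - r)%N; last by rewrite mul0r mul0rn.
have [_|_] := eqVneq (\sum_(i < j) i * m i)%N (k - j * r)%N; last first.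
  by rewrite mul0r mul0rn.
have -> : s = (S + r)%N by lia.
rewrite divn_fact_addn ?dvdn_prod_fact_sum // addnK natrM /= -mulr_natl.
ring.
Qed.

Lemma coef_poly_exp_stable e j k : (k < j)%N ->
  ((\poly_(i < j) X i) ^+ e)`_k = ((\poly_(i < k.+1) X i) ^+ e)`_k.
Proof.
elim: j => [//|j IH]; rewrite ltnS leq_eqVlt => /predU1P[-> //|lt_kj].
rewrite coef_poly_expS big_mkcond big_ord_recl /= muln0 subn0 subn0 expr0 mulr1 bin0.
rewrite big1 ?addr0 ?IH // => r _; rewrite ifF //; apply/negbTE; rewrite -ltnNge.
by apply: (leq_trans lt_kj); rewrite leq_pmulr.
Qed.

Lemma coef_poly_sqr0 j : (0 < j)%N -> ((\poly_(i < j) X i) ^+ 2)`_0 = X 0 ^+ 2.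
Proof. by move=> j_gt0; rewrite expr2 coef0M coef_poly j_gt0. Qed.

Lemma coef_poly_sqr1 j : (1 < j)%N -> ((\poly_(i < j) X i) ^+ 2)`_1 = 2 * X 0 * X 1.
Proof.
move=> j_gt1; rewrite expr2 coefM !big_ord_recr big_ord0 /= subn0 subnn.
by rewrite !coef_poly j_gt1 (ltnW j_gt1); ring.
Qed.

Local Ltac expand_coef :=
  do 5 rewrite ?coef_poly_expS ?big_mkcond ?big_ord_recr ?big_ord0 /=
               ?subSS ?subn0 ?mul1n ?muln1 ?muln0;
  rewrite poly_ord0 !expr0n /= !coefMn !coef1 /= !bin0 !binn ?bin1 -?['C(3, 2)]/3%N.

Lemma coef_poly1_cube0 : ((\poly_(i < 1) X i) ^+ 3)`_0 = X 0 ^+ 3.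
Proof. by expand_coef; ring. Qed.

Lemma coef_poly2_cube1 : ((\poly_(i < 2) X i) ^+ 3)`_1 = 3 * X 0 ^+ 2 * X 1.
Proof. by expand_coef; ring. Qed.

Lemma coef_poly3_cube2 :
  ((\poly_(i < 3) X i) ^+ 3)`_2 = 3 * X 0 ^+ 2 * X 2 + 3 * X 0 * X 1 ^+ 2.
Proof. by expand_coef; ring. Qed.

Lemma coef_poly2_cube3 : ((\poly_(i < 2) X i) ^+ 3)`_3 = X 1 ^+ 3.
Proof. by expand_coef; ring. Qed.

Lemma coef_poly_cube_top M : (2 <= M)%N ->
  ((\poly_(i < M.+2) X i) ^+ 3)`_M.+1 =
  ((\poly_(i < M) X i) ^+ 3)`_M.+1 + 3 * X 0 ^+ 2 * X M.+1 + 6 * X 0 * X 1 * X M.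
Proof.
move=> M_ge2.
rewrite coef_poly_expS big_mkcond !big_ord_recr big_ord0 /= muln0 muln1 subn0 subnn.
rewrite coef_poly_expS big_mkcond !big_ord_recr big_ord0 /= muln0 muln1 subn0.
have -> : (M.+1 * 2 <= M.+1)%N = false by lia.
have -> : (M.+1 * 3 <= M.+1)%N = false by lia.
have -> : (M * 2 <= M.+1)%N = false by lia.
have -> : (M * 3 <= M.+1)%N = false by lia.
rewrite (_ : M.+1 - M = 1)%N ?coef_poly_sqr0 ?coef_poly_sqr1 //; last by lia.
by rewrite leqnSn ltnSn subn0 /= !bin0 !bin1; ring.
Qed.

End PowerCoefficients.

Lemma Pkj_coef_poly k j (X : nat -> int) :
  Pkj k j X = ((\poly_(i < j) X i) ^+ 3)`_k.
Proof.
rewrite (coef_poly_exp_multinomial _ (d := 3)) //.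
by apply: eq_bigr => m _; rewrite natz.
Qed.

Lemma horner_eqz_mod (p : {poly int}) (m : int) n :
  (p.[m] == \sum_(i < n) p`_i * m ^+ i %[mod m ^+ n])%Z.
Proof.
rewrite -{1}(poly_take_drop n p) hornerD hornerM hornerXn horner_poly.
by rewrite eqz_mod_dvd addrC addKr dvdz_mull.
Qed.

Lemma trunc3_horner d n : trunc3 d n = (\poly_(i < n) zd d i).[3].
Proof. by rewrite horner_poly. Qed.

Lemma trunc3S d n : trunc3 d n.+1 = trunc3 d n + zd d n * 3 ^+ n.
Proof. by rewrite /trunc3 big_ord_recr. Qed.

Section CubicCoefficients.
Variables a x : nat -> nat.
Local Notation X := (zd x).
Local Notation A := (zd a).

(* The coefficient of t^s in X(t)^3 + t^3 A(t) X(t). *)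
Definition cubic_coef (s : nat) : int :=
  ((\poly_(i < s.+1) X i) ^+ 3)`_s + \sum_(i < s.-2) X (s - 3 - i) * A i.

Lemma cubic_trunc3_mod n :
  (trunc3 x n ^+ 3 + 3 ^+ 3 * trunc3 a n * trunc3 x n ==
     \sum_(s < n) cubic_coef s * 3 ^+ s %[mod 3 ^+ n])%Z.
Proof.
set F := (\poly_(i < n) X i) ^+ 3 + 'X^3 * \poly_(i < n) A i * \poly_(i < n) X i.
have -> : trunc3 x n ^+ 3 + 3 ^+ 3 * trunc3 a n * trunc3 x n = F.[3].
  by rewrite /F !trunc3_horner hornerD horner_exp hornerM hornerM hornerXn.
rewrite (eq_bigr (fun s : 'I_n => F`_s * 3 ^+ s)) ?horner_eqz_mod //.
move=> [s lt_sn] _ /=; congr (_ * _); apply/esym.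
rewrite coefD coef_poly_exp_stable // -mulrA coefXnM; congr (_ + _).
case: ltnP => [|le3s]; first by case: s {lt_sn} => [|[|[|]]] //; rewrite big_ord0.
rewrite coefM (_ : s.-2 = (s - 3).+1); last by lia.
apply: eq_bigr => i _; have := ltn_ord i; rewrite !coef_poly mulrC => lt_i.
by rewrite !ifT //; lia.
Qed.

(* The multiples of 3 in the N-th coefficient of X(t)^3 that the paper moves
   into the equation of digit N+1, as recorded by Eterm_cubic_coef. *)
Definition deferred_term (N : nat) : int :=
  match N with
  | 1 => X 0 ^+ 2 * X 1
  | 2 => X 0 ^+ 2 * X 2 + X 0 * X 1 ^+ 2
  | _ => X 0 ^+ 2 * X N + 2 * X 0 * X 1 * X N.-1
  end.

Lemma Eterm_cubic_coef N : (1 <= N)%N ->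
  Eterm a x N.+1 = deferred_term N + cubic_coef N.+1 - 3 * deferred_term N.+1.
Proof.
rewrite /Eterm /cubic_coef; case: N => [|[|[|M]]] //= _.
- by rewrite coef_poly3_cube2 big_ord0; ring.
- by rewrite coef_poly_cube_top // Pkj_coef_poly coef_poly2_cube3 big_ord1; ring.
- by rewrite coef_poly_cube_top // Pkj_coef_poly; ring.
Qed.

Definition Eterm_sum (N : nat) : int :=
  X 0 ^+ 3 + \sum_(2 <= k < N.+1) 3 ^+ k * Eterm a x k.

Lemma Eterm_sumS N : (1 <= N)%N ->
  Eterm_sum N.+1 = Eterm_sum N + 3 ^+ N.+1 * Eterm a x N.+1.
Proof. by move=> N_ge1; rewrite /Eterm_sum big_nat_recr //= addrA. Qed.

Lemma cubic_coef_sum N : (1 <= N)%N ->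
  \sum_(s < N.+1) cubic_coef s * 3 ^+ s = Eterm_sum N + 3 ^+ N.+1 * deferred_term N.
Proof.
elim: N => [//|[|N] IH] _.
  rewrite /Eterm_sum /cubic_coef big_geq // !big_ord_recr big_ord0 /=.
  by rewrite coef_poly1_cube0 coef_poly2_cube1 !big_ord0; ring.
rewrite big_ord_recr /= IH // (Eterm_sumS (N := N.+1)) // Eterm_cubic_coef //.
by rewrite [3 ^+ N.+3]exprS; ring.
Qed.

End CubicCoefficients.

Section Carries.
Variables a b x : nat -> nat.

Definition digit_congruence (k : nat) : Prop :=
  (Eterm a x k + Mseq a b x k.-1 == zd b k %[mod 3])%Z.

Lemma Eterm_sum_carry N : (1 <= N)%N ->
  (zd x 0 ^+ 3 == zd b 0 + 3 * zd b 1 %[mod 9])%Z ->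
  (forall k, (2 <= k <= N)%N -> digit_congruence k) ->
  Eterm_sum a x N = trunc3 b N.+1 + 3 ^+ N.+1 * Mseq a b x N.
Proof.
elim: N => [//|[|N] IH] _ cong9 congk.
  rewrite /Eterm_sum big_geq // /= !trunc3S /trunc3 big_ord0.
  set u := zd x 0 ^+ 3 - zd b 0 - 3 * zd b 1.
  have /divzK : (9 %| u)%Z by move: cong9; rewrite eqz_mod_dvd /u opprD addrA.
  set q := (u %/ 9)%Z => qE.
  have -> : zd x 0 ^+ 3 = u + zd b 0 + 3 * zd b 1 by rewrite /u; ring.
  by rewrite -qE; ring.
have : digit_congruence N.+2 by apply: congk; rewrite leqnn andbT.
rewrite /digit_congruence eqz_mod_dvd => /divzK; set q := (_ %/ 3)%Z => qE.
rewrite Eterm_sumS // IH // => [|k /andP[k_ge2 k_le]]; last first.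
  by apply: congk; rewrite k_ge2 ltnW.
have -> : Eterm a x N.+2 = q * 3 - Mseq a b x N.+1 + zd b N.+2 by rewrite qE; ring.
by rewrite (trunc3S b N.+2) [Mseq _ _ _ N.+2]/= -/q [3 ^+ N.+3]exprSr; ring.
Qed.

Lemma digit_congruence_step N : (1 <= N)%N ->
  Eterm_sum a x N = trunc3 b N.+1 + 3 ^+ N.+1 * Mseq a b x N ->
  (Eterm_sum a x N.+1 == trunc3 b N.+2 %[mod 3 ^+ N.+2])%Z -> digit_congruence N.+1.
Proof.
move=> N_ge1 sumN; rewrite Eterm_sumS // sumN (trunc3S b N.+1) eqz_mod_dvd.
rewrite (_ : _ - _ = 3 ^+ N.+1 * (Eterm a x N.+1 + Mseq a b x N - zd b N.+1));
  last by ring.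
by rewrite [X in (X %| _)%Z]exprSr dvdz_mul2l ?expf_neq0 // -eqz_mod_dvd.
Qed.

Lemma Eterm_sum_congr_iff :
  (forall N, (1 <= N)%N -> (Eterm_sum a x N == trunc3 b N.+1 %[mod 3 ^+ N.+1])%Z) <->
  (zd x 0 ^+ 3 == zd b 0 + 3 * zd b 1 %[mod 9])%Z /\
  (forall k, (2 <= k)%N -> digit_congruence k).
Proof.
split=> [congN | [cong9 congk] N N_ge1]; last first.
  rewrite (Eterm_sum_carry N_ge1 cong9) => [|k /andP[k_ge2 _]]; last exact: congk.
  by rewrite eqz_mod_dvd addrC addKr; apply/dvdz_mulr/dvdzz.
have cong9 : (zd x 0 ^+ 3 == zd b 0 + 3 * zd b 1 %[mod 9])%Z.
  have := congN 1%N isT; rewrite /Eterm_sum big_geq // addr0.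
  by rewrite !trunc3S /trunc3 big_ord0 add0r expr0 mulr1 mulrC expr1.
suff congle N : (1 <= N)%N -> forall k, (2 <= k <= N)%N -> digit_congruence k.
  by split=> // k k_ge2; apply: (congle k (ltnW k_ge2)); rewrite k_ge2 leqnn.
elim: N => [//|[|N] IH] _ k /andP[k_ge2]; rewrite leq_eqVlt => k_le.
  by case: k k_ge2 k_le => [|[|]].
case/predU1P: k_le => [->|k_lt]; last by apply: IH; rewrite ?k_ge2.
apply: (digit_congruence_step (N := N.+1)) => //; last exact: congN.
exact: Eterm_sum_carry cong9 (IH isT).
Qed.

End Carries.

Lemma cubic_solution_iff a b x : cubic_solution a b x <->
  (zd x 0 ^+ 3 == zd b 0 %[mod 3])%Z /\
  (forall N, (1 <= N)%N -> (Eterm_sum a x N == trunc3 b N.+1 %[mod 3 ^+ N.+1])%Z).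
Proof.
have cubic_mod N : (1 <= N)%N ->
    (trunc3 x N.+1 ^+ 3 + 3 ^+ 3 * trunc3 a N.+1 * trunc3 x N.+1 ==
     Eterm_sum a x N %[mod 3 ^+ N.+1])%Z.
  move=> N_ge1; rewrite (eqP (cubic_trunc3_mod a x N.+1)) cubic_coef_sum //.
  by apply/eqP; rewrite addrC mulrC modzMDl.
have cubic_mod1 : (trunc3 x 1 ^+ 3 + 3 ^+ 3 * trunc3 a 1 * trunc3 x 1 ==
                   zd x 0 ^+ 3 %[mod 3])%Z.
  rewrite (eqP (cubic_trunc3_mod a x 1)) big_ord1 /cubic_coef coef_poly1_cube0.
  by rewrite big_ord0 addr0 expr0 mulr1.
have trunc3_1 : trunc3 b 1 = zd b 0 by rewrite /trunc3 big_ord1 expr0 mulr1.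
split=> [sol | [cong3 congN] [|[|N]]].
- split; first by rewrite -trunc3_1 -(eqP cubic_mod1); exact: sol 1%N.
  by move=> N N_ge1; rewrite -(eqP (cubic_mod N N_ge1)); exact: sol N.+1.
- by rewrite expr0 !modz1.
- by rewrite trunc3_1 (eqP cubic_mod1).
- by rewrite (eqP (cubic_mod N.+1 isT)); exact: congN.
Qed.

Theorem theorem3p5 (a b x : nat -> nat)
  (ha : digits3 a) (ha0 : a 0%N <> 0%N)
  (hb : digits3 b) (hb0 : b 0%N <> 0%N)
  (hb01 : (b 0%N = 1%N /\ b 1%N = 0%N) \/ (b 0%N = 2%N /\ b 1%N = 2%N))
  (hx : digits3 x) (hx0 : x 0%N <> 0%N) :
  cubic_solution a b x <-> congruences a b x.
Proof.
rewrite cubic_solution_iff Eterm_sum_congr_iff.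
by split=> [[cong3 [cong9 congk]] | [cong3 cong9 congk]]; split.
Qed.
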